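(* For every integer $n>1$ and every integer $k$ with $1\le k\le 2n$, $c_{2k,n}=2^{k+1}-1$.
   Context: Fix $n>1$. Let $Q_n=\{(1,n+1)\}\cup\{(m,2n+2-m):2\le m\le n\}\cup\{(m,2n+1-m):n+1\le m\le 2n\}$. For integers $1\le i,j\le 2n$ and $k\ge1$ define $b_{k,i,j,n}$ recursively by $b_{1,i,j,n}=1$ if $(i,j)\in Q_n$ and $0$ otherwise, and $b_{k+1,i,j,n}=b_{k,i,2n+1-j,n}+b_{k,i,n+1,n}$ if $1\le j\le n-1$; $b_{k+1,i,n,n}=b_{k,i,n,n}+b_{k,i,n+1,n}$; $b_{k+1,i,n+1,n}=b_{k,i,1,n}$; $b_{k+1,i,j,n}=b_{k,i,2n+2-j,n}$ if $n+2\le j\le 2n$. Define $c_{k,n}=\sum_{i=1}^{2n}b_{k,i,i,n}+b_{k,n+1,n,n}+\sum_{i=n+2}^{2n}b_{k,i,n+1,n}$. *)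

From mathcomp Require Import all_boot.
Set Implicit Arguments. Unset Strict Implicit. Unset Printing Implicit Defensive.

Definition inQ (n i j : nat) : bool :=
  [|| (i == 1) && (j == n.+1),
      [&& 2 <= i, i <= n & j == (2 * n + 2) - i]
    | [&& n.+1 <= i, i <= 2 * n & j == (2 * n + 1) - i]].

(* b k i j n ; the paper's index k >= 1.  b 0 is an unused dummy (0). *)
Fixpoint b (k i j n : nat) {struct k} : nat :=
  match k with
  | 0 => 0
  | 1 => if inQ n i j then 1 else 0
  | k'.+1 =>
      if (1 <= j) && (j <= n - 1) then b k' i (2 * n + 1 - j) n + b k' i n.+1 n
      else if j == n then b k' i n n + b k' i n.+1 n
      else if j == n.+1 then b k' i 1 n
      else if (n + 2 <= j) && (j <= 2 * n) then b k' i (2 * n + 2 - j) n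
      else 0
  end.

Definition c (k n : nat) : nat :=
  \sum_(1 <= i < (2 * n).+1) b k i i n + b k n.+1 n n
  + \sum_(n + 2 <= i < (2 * n).+1) b k i n.+1 n.

From mathcomp Require Import all_boot zify.
Set Implicit Arguments. Unset Strict Implicit. Unset Printing Implicit Defensive.

(* The recursion defining b_{k,i,j,n} is linear in its third index, and after
   relabelling the indices j = 1..2n by "levels" 0..2n-1 it becomes the walk
   recursion of a small directed graph G_n on {0, ..., 2n-1}: every level y
   steps up to y+1 (below the top level 2n-1), every odd level also drops back
   to 0, and the top level carries a loop.  Thus b_{k+1,i,j,n} counts the walks
   of length k in G_n from level(j) to a start level depending on i (lemma
   b_walks).

   Away from the top, a walk into level x > 0
   must come from x-1, so walks into x reduce to walks into 0 (walks_climb,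
   walks_short); walks into 0 are counted by a simultaneous induction on the
   length (zero_walks), all counts being powers of two, halfpow s = 2^((s-1)/2).
   Walks into the top level are then obtained from its two in-edges.

   The trace c_{2k,n} splits into three blocks: the diagonal entries with
   i <= n, the two entries in row n+1, and the pairs (i,i), (i,n+1) with
   i >= n+2.  The first and last blocks are geometric sums that fall short of
   2^k by 2^(k-n) and 2^(k+1-n) respectively (with truncated subtraction), and
   the middle block plus one equals exactly these two defects; this gives
   c_{2k,n} = 2^(k+1) - 1. *)

Local Notation top n := (2 * n).-1.

Definition step (n : nat) (f : nat -> nat) (y : nat) : nat :=
  (if y.+1 < 2 * n then f y.+1 else 0) + (if odd y then f 0 else 0)
  + (if y == top n then f y else 0).

(* walks n t x y: the number of walks of length t in G_n from y to x. *)
Fixpoint walks (n t x : nat) : nat -> nat :=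
  if t is t'.+1 then step n (walks n t' x) else fun y => x == y.

Ltac case_ifs := repeat case: ifP => ?.

Lemma walksS n t x y : walks n t.+1 x y = step n (walks n t x) y.
Proof. by []. Qed.

Lemma step_ext n f g y : y < 2 * n -> (forall z, z < 2 * n -> f z = g z) ->
  step n f y = step n g y.
Proof. by move=> lt_y fg; rewrite /step; case_ifs; rewrite ?fg //; lia. Qed.

Lemma step_add n f g y : step n (fun z => f z + g z) y = step n f y + step n g y.
Proof. by rewrite /step; case_ifs; lia. Qed.

(* The only edge into an inner level x is x-1 -> x. *)
Lemma walks_inner n t x y : 0 < x -> x.+1 < 2 * n -> y < 2 * n ->
  walks n t.+1 x y = walks n t x.-1 y.
Proof.
move=> x_gt0 x_lt lt_y; elim: t y lt_y => [|t IH] y lt_y.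
  by rewrite walksS /step /=; case_ifs; lia.
by rewrite walksS (step_ext lt_y IH).
Qed.

(* The edges into the top level come from the level below it and from the loop. *)
Lemma walks_top n t y : 0 < n -> y < 2 * n ->
  walks n t.+1 (top n) y = walks n t (top n).-1 y + walks n t (top n) y.
Proof.
move=> n_gt0; elim: t y => [|t IH] y lt_y.
  by rewrite walksS /step /=; case_ifs; lia.
by rewrite walksS (step_ext lt_y IH) step_add.
Qed.

Lemma walks_shift n t m x y : x + m < top n -> y < 2 * n ->
  walks n (t + m) (x + m) y = walks n t x y.
Proof.
move=> lt_xm lt_y; elim: m lt_xm => [|m IH] lt_xm; first by rewrite !addn0.
by rewrite !addnS walks_inner ?IH //; lia.
Qed.

(* Below the top, a walk into x is a walk into 0 followed by x climbing steps... *)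
Lemma walks_climb n t x y : x < top n -> y < 2 * n -> x <= t ->
  walks n t x y = walks n (t - x) 0 y.
Proof. by move=> lt_x lt_y le_xt; rewrite -(@walks_shift n (t - x) x 0 y) ?add0n ?subnK. Qed.

(* ... or, if it is too short to visit 0, a straight climb. *)
Lemma walks_short n t x y : x < top n -> y < 2 * n -> t <= x ->
  walks n t x y = (x - t == y).
Proof.
move=> lt_x lt_y le_tx; rewrite -[RHS]/(walks n 0 (x - t) y).
by rewrite -(@walks_shift n 0 t (x - t) y) ?add0n ?subnK.
Qed.

(* Relabelling: index j of b sits at level(j) of G_n, the row index i starts
   the walks at start_level(i); the levels 1, 3, ..., 2n-1 are the indices
   1..n, the level 0 is n+1 and the levels 2n-2, ..., 2 are n+2..2n. *)
Definition level (n j : nat) : nat :=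
  if j <= n then (2 * j).-1 else if j == n.+1 then 0 else 2 * (2 * n + 1 - j).

Definition start_level (n i : nat) : nat :=
  if i == n.+1 then top n else (level n i).-1.

Lemma level_low n j : j <= n -> level n j = (2 * j).-1.
Proof. by rewrite /level => ->. Qed.

Lemma level_mid n : level n n.+1 = 0.
Proof. by rewrite /level ltnn eqxx. Qed.

Lemma level_high n j : n.+1 < j -> level n j = 2 * (2 * n + 1 - j).
Proof. by move=> lt_j; rewrite /level; case_ifs; lia. Qed.

Lemma start_level_pred n i : i != n.+1 -> start_level n i = (level n i).-1.
Proof. by rewrite /start_level => /negbTE ->. Qed.

Lemma b1_level n i j : 1 < n -> 1 <= i <= 2 * n -> 1 <= j <= 2 * n ->
  (if inQ n i j then 1 else 0) = (start_level n i == level n j).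
Proof. by move=> *; rewrite /inQ /start_level /level; case_ifs; lia. Qed.

Lemma step_level_low n f j : 1 < n -> 1 <= j <= n - 1 ->
  step n f (level n j) = f (level n (2 * n + 1 - j)) + f (level n n.+1).
Proof.
move=> n_gt1 j_low; rewrite level_mid (level_high (j := 2 * n + 1 - j)) ?level_low; try lia.
have -> : 2 * (2 * n + 1 - (2 * n + 1 - j)) = (2 * j).-1.+1 by lia.
by rewrite /step; case_ifs; lia.
Qed.

Lemma step_level_n n f : 1 < n ->
  step n f (level n n) = f (level n n) + f (level n n.+1).
Proof. by move=> n_gt1; rewrite level_mid level_low // /step; case_ifs; lia. Qed.

Lemma step_level_mid n f : 1 < n -> step n f (level n n.+1) = f (level n 1).
Proof.
move=> n_gt1; have -> : level n 1 = 1 by rewrite level_low //; lia.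
by rewrite level_mid /step /=; case_ifs; lia.
Qed.

Lemma step_level_high n f j : 1 < n -> n + 2 <= j <= 2 * n ->
  step n f (level n j) = f (level n (2 * n + 2 - j)).
Proof.
move=> n_gt1 j_high; rewrite (level_low (j := 2 * n + 2 - j)) ?level_high; try lia.
have -> : (2 * (2 * n + 2 - j)).-1 = (2 * (2 * n + 1 - j)).+1 by lia.
by rewrite /step; case_ifs; lia.
Qed.

Lemma b_rec k i j n : b k.+2 i j n =
  if (1 <= j) && (j <= n - 1) then b k.+1 i (2 * n + 1 - j) n + b k.+1 i n.+1 n
  else if j == n then b k.+1 i n n + b k.+1 i n.+1 n
  else if j == n.+1 then b k.+1 i 1 n
  else if (n + 2 <= j) && (j <= 2 * n) then b k.+1 i (2 * n + 2 - j) n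
  else 0.
Proof. by []. Qed.

Lemma b_walks n k i j : 1 < n -> 1 <= i <= 2 * n -> 1 <= j <= 2 * n ->
  b k.+1 i j n = walks n k (start_level n i) (level n j).
Proof.
move=> n_gt1 i_range; elim: k j => [|k IH] j j_range; first exact: b1_level.
rewrite b_rec walksS; case: ifP => [j_low|?]; first by rewrite step_level_low // !IH //; lia.
case: ifP => [/eqP->|?]; first by rewrite step_level_n // !IH //; lia.
case: ifP => [/eqP->|?]; first by rewrite step_level_mid // IH //; lia.
case: ifP => [j_high|?]; first by rewrite step_level_high // IH //; lia.
lia.
Qed.

Lemma b_even n k i j : 1 < n -> 0 < k -> 1 <= i <= 2 * n -> 1 <= j <= 2 * n ->
  b (2 * k) i j n = walks n (2 * k).-1 (start_level n i) (level n j).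
Proof. by move=> n_gt1 k_gt0 i_range j_range; rewrite -b_walks // prednK //; lia. Qed.

Definition halfpow (s : nat) : nat := 2 ^ (s.-1)./2.

Lemma halfpow_small s : s <= 2 -> halfpow s = 1.
Proof. by case: s => [|[|[|]]]. Qed.

Lemma halfpow_succ s : 0 < s ->
  halfpow s.+1 = halfpow s + (if odd s then 0 else halfpow s).
Proof.
case: s => // s _; rewrite /halfpow /= uphalf_half.
by case: (odd s) => /=; rewrite ?addn0 // expnD expn1 mul2n addnn.
Qed.

Lemma halfpow_SS s : 0 < s -> halfpow s.+2 = 2 * halfpow s.
Proof. by case: s => // s _; rewrite /halfpow /= expnS. Qed.

Lemma halfpow_odd d : halfpow (2 * d).+1 = 2 ^ d.
Proof. by rewrite /halfpow /= mul2n doubleK. Qed.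

Lemma halfpow_even d : halfpow (2 * d.+1) = 2 ^ d.
Proof. by rewrite /halfpow mul2n doubleS /= uphalf_double. Qed.

(* The three
   counts depend on each other, so they are proved by one induction. *)
Definition zero_walks_spec (n s : nat) : Prop :=
  [/\ forall y, y < 2 * n -> odd (s + y) -> s + y <= top n -> walks n s 0 y = 0,
      forall y, y < 2 * n -> ~~ odd (s + y) -> s + y <= 4 * n ->
        walks n s 0 y = halfpow s
    & s <= (2 * n).+1 -> walks n s 0 (top n) = halfpow s].

Lemma zero_walks_base n : 1 < n -> zero_walks_spec n 1.
Proof. by move=> n_gt1; split=> [y|y|] *; rewrite walksS /step /halfpow /=; case_ifs; lia. Qed.

Lemma zero_walks_step n s : 1 < n -> 0 < s ->
  zero_walks_spec n s -> zero_walks_spec n s.+1.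
Proof.
move=> n_gt1 s_gt0 [odd_walks even_walks top_walks].
have top_step : s.+1 <= (2 * n).+1 -> walks n s.+1 0 (top n) = halfpow s.+1.
  move=> le_s; rewrite walksS /step halfpow_succ // -top_walks; last by lia.
  have -> : walks n s 0 0 = if odd s then 0 else halfpow s.
    by case: ifP => odd_s; [apply: odd_walks | apply: even_walks]; lia.
  by case_ifs; lia.
split=> // y lt_y par_y le_y.
  rewrite walksS /step (odd_walks y.+1); try lia.
  by case_ifs; rewrite ?odd_walks; lia.
have [eq_y|ne_y] := eqVneq y (top n); first by rewrite eq_y top_step; lia.
rewrite walksS /step (even_walks y.+1) ?halfpow_succ; try lia.
by case_ifs; rewrite ?even_walks; lia.
Qed.

Lemma zero_walks n s : 1 < n -> 0 < s -> zero_walks_spec n s.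
Proof.
move=> n_gt1; elim: s => [//|[|s] IH] _; first exact: zero_walks_base.
exact: zero_walks_step (IH _).
Qed.

Lemma returns_to_zero n s : 1 < n -> 0 < s <= 2 * n ->
  walks n s 0 0 = if odd s then 0 else halfpow s.
Proof.
move=> n_gt1 s_range; have [odd_walks even_walks _] := zero_walks n_gt1 (s := s) (ltac:(lia)).
by case: ifP => odd_s; [apply: odd_walks | apply: even_walks]; lia.
Qed.

Lemma top_to_zero n s : 1 < n -> 0 < s <= (2 * n).+1 ->
  walks n s 0 (top n) = halfpow s.
Proof. by move=> n_gt1 s_range; have [_ _ ->] := zero_walks n_gt1 (s := s) (ltac:(lia)); lia. Qed.

Lemma walks_zero_to_top n t : 1 < n -> t <= (4 * n).-1 ->
  walks n t (top n) 0 = if t < top n then 0 else halfpow (t.+2 - 2 * n).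
Proof.
move=> n_gt1; elim: t => [|t IH] le_t; first by rewrite /=; case_ifs; lia.
rewrite walks_top ?IH; try lia.
have [le_t_top|lt_top_t] := leqP t (top n).-1.
  by rewrite walks_short ?(halfpow_small (s := t.+3 - 2 * n)); try lia; case_ifs; lia.
rewrite walks_climb ?returns_to_zero; try lia.
have -> : t.+3 - 2 * n = (t - (top n).-1).+1 by lia.
have -> : t.+2 - 2 * n = t - (top n).-1 by lia.
by rewrite halfpow_succ; try lia; case_ifs; lia.
Qed.

Lemma walks_top_to_top n t : 1 < n -> t <= (4 * n).-1 ->
  walks n t (top n) (top n) + 1 = halfpow (t.+2 - 2 * n) + halfpow (t.+3 - 2 * n).
Proof.
move=> n_gt1; elim: t => [|t IH] le_t.
  by rewrite /= eqxx !halfpow_small; lia.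
rewrite walks_top -?addnA ?IH; try lia.
have [le_t_top|lt_top_t] := leqP t (top n).-1.
  by rewrite walks_short ?(@halfpow_small (_ - _)); lia.
rewrite walks_climb ?top_to_zero; try lia.
have -> : t.+2 - 2 * n = t - (top n).-1 by lia.
have -> : t.+4 - 2 * n = (t - (top n).-1).+2 by lia.
by rewrite halfpow_SS; lia.
Qed.

(* Walks of odd length 2k-1 one level down (the diagonal entries of b_{2k}). *)
Lemma walks_one_down n k l : 1 < n -> 0 < k <= 2 * n -> 1 <= l <= top n ->
  walks n (2 * k).-1 l.-1 l = if l < 2 * k then halfpow (2 * k - l) else 0.
Proof.
move=> n_gt1 k_range l_range.
have [lt_l|le_l] := ltnP l (2 * k); last by rewrite walks_short; lia.
have [_ even_walks _] := zero_walks n_gt1 (s := 2 * k - l) (ltac:(lia)).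
rewrite walks_climb; try lia.
by rewrite (_ : (2 * k).-1 - l.-1 = 2 * k - l) ?even_walks; lia.
Qed.

(* Walks of length 2k-1 from 0 up to an odd level (the column n+1 of b_{2k}). *)
Lemma walks_zero_up n k p : 1 < n -> 0 < k <= 2 * n -> 1 <= p < n ->
  walks n (2 * k).-1 (2 * p).-1 0 = if p < k then halfpow (2 * (k - p)) else (p == k).
Proof.
move=> n_gt1 k_range p_range.
have [lt_p|le_p] := ltnP p k; last by rewrite walks_short; lia.
have [_ even_walks _] := zero_walks n_gt1 (s := 2 * (k - p)) (ltac:(lia)).
rewrite walks_climb; try lia.
by rewrite (_ : (2 * k).-1 - (2 * p).-1 = 2 * (k - p)) ?even_walks; lia.
Qed.

Lemma geom_tail k n :
  \sum_(1 <= i < n.+1) (if i <= k then 2 ^ (k - i) else 0) + 2 ^ (k - n) = 2 ^ k.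
Proof.
elim: n => [|n IH]; first by rewrite big_geq ?subn0.
rewrite big_nat_recr //= -addnA -{}IH; congr (_ + _).
case: (ltnP n k) => /= [lt_nk|le_kn].
  by rewrite addnn -mul2n -expnS; congr (2 ^ _); lia.
by rewrite add0n; congr (2 ^ _); lia.
Qed.

Lemma geom_tail_strict k n : 0 < n ->
  \sum_(1 <= p < n) (if p < k then 2 ^ (k - p) else p == k) + 2 ^ (k.+1 - n) = 2 ^ k.
Proof.
elim: n => [|[|n] IH] // _; first by rewrite big_geq // subSS subn0.
rewrite big_nat_recr //= -addnA -{}IH //; congr (_ + _).
case: (ltngtP n.+1 k) => /= [lt_nk|lt_kn|<-].
- by rewrite addnn -mul2n -expnS; congr (2 ^ _); lia.
- by rewrite add0n; congr (2 ^ _); lia.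
- by rewrite subnn subSnn.
Qed.

Lemma sum_reflect n (F : nat -> nat) :
  \sum_(n.+2 <= i < (2 * n).+1) F i = \sum_(1 <= p < n) F ((2 * n).+1 - p).
Proof.
rewrite big_nat_rev -[n.+2]/(1 + n.+1) big_addn.
rewrite (_ : (2 * n).+1 - n.+1 = n); last by lia.
by apply: eq_big_nat => p p_range; congr F; lia.
Qed.

Lemma sum_split_mid n (F : nat -> nat) : 0 < n ->
  \sum_(1 <= i < (2 * n).+1) F i =
  \sum_(1 <= i < n.+1) F i + F n.+1 + \sum_(n.+2 <= i < (2 * n).+1) F i.
Proof.
move=> n_gt0; rewrite (@big_cat_nat _ _ _ n.+1) ?(@big_ltn _ _ _ n.+1); [exact: addnA|lia..].
Qed.

Lemma c_blocks k n : 0 < n ->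
  c k n = \sum_(1 <= i < n.+1) b k i i n + (b k n.+1 n.+1 n + b k n.+1 n n)
          + \sum_(n.+2 <= i < (2 * n).+1) (b k i i n + b k i n.+1 n).
Proof.
move=> n_gt0; rewrite /c addn2 sum_split_mid // -!addnA.
by congr (_ + (_ + _)); rewrite addnCA big_split.
Qed.

Lemma lower_diag_sum n k : 1 < n -> 0 < k <= 2 * n ->
  \sum_(1 <= i < n.+1) b (2 * k) i i n + 2 ^ (k - n) = 2 ^ k.
Proof.
move=> n_gt1 k_range; rewrite -(geom_tail k n); congr (_ + _).
apply: eq_big_nat => i i_range.
rewrite b_even ?start_level_pred ?level_low ?walks_one_down; try lia.
case: (leqP i k) => [le_ik|lt_ki]; last by rewrite ifF //; lia.
rewrite ifT; last by lia.
by rewrite (_ : 2 * k - (2 * i).-1 = (2 * (k - i)).+1) ?halfpow_odd //; lia.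
Qed.

Lemma upper_sum n k : 1 < n -> 0 < k <= 2 * n ->
  \sum_(n.+2 <= i < (2 * n).+1) (b (2 * k) i i n + b (2 * k) i n.+1 n)
  + 2 ^ (k.+1 - n) = 2 ^ k.
Proof.
move=> n_gt1 k_range; rewrite -(@geom_tail_strict k n) ?sum_reflect; last by lia.
congr (_ + _); apply: eq_big_nat => p p_range.
have level_p : level n ((2 * n).+1 - p) = 2 * p by rewrite level_high; lia.
rewrite !b_even ?start_level_pred; [|lia..].
rewrite level_p level_mid walks_one_down ?walks_zero_up; [|lia..].
case: (ltnP p k) => [lt_pk|le_kp]; last by rewrite ifF //; lia.
rewrite ifT; last by lia.
rewrite -mulnBr (_ : k - p = (k - p).-1.+1) ?halfpow_even; last by lia.
by rewrite addnn expnS mul2n.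
Qed.

(* Row n+1 starts at the top level: its two entries are walks into the top. *)
Lemma center_terms n k : 1 < n -> 0 < k <= 2 * n ->
  b (2 * k) n.+1 n.+1 n + b (2 * k) n.+1 n n + 1 = 2 ^ (k - n) + 2 ^ (k.+1 - n).
Proof.
move=> n_gt1 k_range.
have start_mid : start_level n n.+1 = top n by rewrite /start_level eqxx.
rewrite !b_even ?start_mid ?level_mid ?level_low; [|lia..].
rewrite -addnA walks_top_to_top ?walks_zero_to_top; [|lia..].
have [lt_kn|le_kn] := ltnP (top k) (top n).
  have [-> ->] : k - n = 0 /\ k.+1 - n = 0 by lia.
  by rewrite !(@halfpow_small (_ - _)) //; lia.
rewrite (_ : (top k).+2 - 2 * n = (2 * (k - n)).+1); last by lia.
rewrite (_ : (top k).+3 - 2 * n = 2 * (k - n).+1); last by lia.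
rewrite halfpow_odd halfpow_even (_ : k.+1 - n = (k - n).+1); last by lia.
by rewrite expnS mul2n addnn.
Qed.

Theorem mainTheorem5 (n k : nat) :
  1 < n -> 1 <= k <= 2 * n -> c (2 * k) n = 2 ^ k.+1 - 1.
Proof.
move=> n_gt1 k_range.
have lower := lower_diag_sum n_gt1 k_range.
have center := center_terms n_gt1 k_range.
have upper := upper_sum n_gt1 k_range.
rewrite c_blocks ?expnS; last by lia.
move: lower center upper; move: (2 ^ k) (2 ^ (k - n)) (2 ^ (k.+1 - n)) => pk pl pu.
lia.
Qed.
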